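(* Let $q$ be a prime power, $k<n$ integers and ${\mathcal D}$ a probability distribution on $\{0,1,\dots,k\}$. Consider the following randomized algorithm PrangeOne on input ${\mathbf{H}}\in\mathbb{F}_q^{(n-k)\times n}$ and ${\mathbf{s}}\in\mathbb{F}_q^{n-k}$: draw $t\sim{\mathcal D}$; let ${\mathcal I}$ be an information set of the code $\{{\mathbf{x}}:{\mathbf{x}}{\mathbf{H}}^\top={\mathbf{0}}\}$ (a set of $k$ positions whose complement indexes $n-k$ linearly independent columns of ${\mathbf{H}}$); draw ${\mathbf{x}}$ uniformly among the vectors of $\mathbb{F}_q^n$ with $|{\mathbf{x}}_{\mathcal I}|=t$; output the unique ${\mathbf{e}}\in\mathbb{F}_q^n$ with ${\mathbf{e}}{\mathbf{H}}^\top={\mathbf{s}}$ and ${\mathbf{e}}_{\mathcal I}={\mathbf{x}}_{\mathcal I}$. When ${\mathbf{H}}$ is chosen uniformly at random in $\mathbb{F}_q^{(n-k)\times n}$ and ${\mathbf{s}}$ uniformly at random in $\mathbb{F}_q^{n-k}$, the output ${\mathbf{e}}$ satisfies $|{\mathbf{e}}|=S+T$, where $S\in\{0,\dots,n-k\}$ and $T\in\{0,\dots,k\}$ are independent random variables, $S$ is distributed as the Hamming weight of a uniformly random vector of $\mathbb{F}_q^{n-k}$, and $\mathbb{P}(T=t)={\mathcal D}(t)$. Consequently $$\mathbb{P}(|{\mathbf{e}}|=w)=\sum_{t=0}^{w}\frac{\binom{n-k}{w-t}(q-1)^{w-t}}{q^{n-k}}{\mathcal D}(t),\qquad \mathbb{E}(|{\mathbf{e}}|)=\overline{{\mathcal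 D}}+\frac{q-1}{q}(n-k),$$ where $\overline{{\mathcal D}}=\sum_{t=0}^k t\,{\mathcal D}(t)$.
   Context: $|{\mathbf{x}}|$ denotes the Hamming weight (number of nonzero coordinates) of ${\mathbf{x}}$; ${\mathbf{x}}_{\mathcal I}$ denotes the restriction of ${\mathbf{x}}$ to the coordinates in ${\mathcal I}$. *)

From HB Require Import structures.
From mathcomp Require Import all_boot all_order all_algebra.
Set Implicit Arguments. Unset Strict Implicit. Unset Printing Implicit Defensive.
Import Order.TTheory GRing.Theory Num.Theory.
Local Open Scope ring_scope.

Section Prange.
Variable F : finFieldType.

Definition wt m (x : 'rV[F]_m) : nat := #|[set i | x 0 i != 0]|.

Definition wtI n (I : {set 'I_n}) (x : 'rV[F]_n) : nat :=
  #|[set i in I | x 0 i != 0]|.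

(* H with every column outside J replaced by zero; its rank is the
   dimension of the span of the columns indexed by J. *)
Definition keep_cols m n (H : 'M[F]_(m, n)) (J : {set 'I_n}) : 'M[F]_(m, n) :=
  \matrix_(i, j) (if j \in J then H i j else 0).

Definition is_info_set (k m n : nat) (H : 'M[F]_(m, n)) (I : {set 'I_n}) : bool :=
  (#|I| == k) && (\rank (keep_cols H (~: I)) == #|~: I|).

(* Output of PrangeOne: the unique e with e H^T = s and e_I = x_I
   (0 if no such e exists, which never happens for info sets). *)
Definition prange_out m n (H : 'M[F]_(m, n)) (s : 'rV[F]_m) (I : {set 'I_n})
    (x : 'rV[F]_n) : 'rV[F]_n :=
  odflt 0 [pick e : 'rV[F]_n | (e *m H^T == s) && [forall i in I, e 0 i == x 0 i]].

Variable R : realFieldType.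

(* Expectation of f(e), e the output of PrangeOne, where H is uniform among
   the (n-k) x n matrices admitting an information set (i.e. of full rank
   n-k), s uniform in F^(n-k), t ~ D, the information set is choose H and
   x is uniform among the x in F^n with |x_I| = t. *)
Definition prange_expect (n k : nat) (D : 'I_k.+1 -> R)
    (choose : 'M[F]_(n - k, n) -> {set 'I_n}) (f : 'rV[F]_n -> R) : R :=
  \sum_(H : 'M[F]_(n - k, n) | \rank H == (n - k)%N)
   \sum_(s : 'rV[F]_(n - k))
   \sum_(t : 'I_k.+1)
   \sum_(x : 'rV[F]_n | wtI (choose H) x == t)
     ((#|[set H' : 'M[F]_(n - k, n) | \rank H' == (n - k)%N]|%:R)^-1
      * ((#|F| ^ (n - k))%:R)^-1 * D t
      * (#|[set x' : 'rV[F]_n | wtI (choose H) x' == t]|%:R)^-1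
      * f (prange_out H s (choose H) x)).

Definition lawS (m : nat) (a : nat) : R :=
  #|[set y : 'rV[F]_m | wt y == a]|%:R / (#|F| ^ m)%:R.

End Prange.

(* For a full-rank H with information set I, the syndrome map d |-> d H^T is a
   bijection from the vectors supported on the complement of I onto F^(n-k):
   onto because the n-k columns of H outside I span F^(n-k), injective by
   counting.  So for fixed H and x, as s ranges over F^(n-k) the output of
   PrangeOne ranges exactly once over x_I + d, d supported off I, and
   |e| = |x_I| + |d| where |d| is distributed as the weight of a uniform vector
   of F^(n-k).  This law does not depend on H, and |x_I| = t with t ~ D. *)

From HB Require Import structures.
From mathcomp Require Import all_boot all_order all_algebra ring.
Set Implicit Arguments. Unset Strict Implicit. Unset Printing Implicit Defensive.
Import Order.TTheory GRing.Theory Num.Theory.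
Local Open Scope ring_scope.

Section Prange.
Variable F : finFieldType.
Local Notation q := #|F|.

Definition supp n (x : 'rV[F]_n) : {set 'I_n} := [set i | x 0 i != 0].

Definition supported n (J : {set 'I_n}) : {set 'rV[F]_n} :=
  [set x | supp x \subset J].

Definition restr n (I : {set 'I_n}) (x : 'rV[F]_n) : 'rV[F]_n :=
  \row_i (if i \in I then x 0 i else 0).

Lemma card_rV_ffun n (A : {pred {ffun 'I_n -> F}}) :
  #|[set x : 'rV[F]_n | [ffun i => x 0 i] \in A]| = #|A|.
Proof.
pose row_of (f : {ffun 'I_n -> F}) : 'rV[F]_n := \row_i f i.
have row_ofK : cancel row_of (fun x => [ffun i => x 0 i]).
  by move=> f; apply/ffunP=> i; rewrite !ffunE mxE.
rewrite -(card_imset _ (can_inj row_ofK)); apply: eq_card => x; rewrite inE.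
apply/idP/imsetP => [Px | [f Af ->]]; last by rewrite row_ofK.
by exists [ffun i => x 0 i] => //; apply/rowP => i; rewrite mxE ffunE.
Qed.

Lemma support_ffun_row n (x : 'rV[F]_n) : 0.-support [ffun i => x 0 i] =i supp x.
Proof. by move=> i; rewrite !inE ffunE. Qed.

Lemma card_supported n (J : {set 'I_n}) : #|supported J| = (q ^ #|J|)%N.
Proof.
have -> : q = #|[pred _ : F | true]| by apply: eq_card.
rewrite -(card_pffun_on 0) -(card_rV_ffun (pffun_on _ _ _)); apply: eq_card => x.
rewrite !inE -(eq_subset (support_ffun_row x)).
by apply/idP/pffun_onP => [sJ | []].
Qed.

Lemma card_supp_eq n (S : {set 'I_n}) :
  #|[set x : 'rV[F]_n | supp x == S]| = ((q - 1) ^ #|S|)%N.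
Proof.
rewrite subn1 -(cardC1 (0 : F)) -(card_pffun_on 0) -(card_rV_ffun (pffun_on _ _ _)).
apply: eq_card => x; rewrite !inE; apply/eqP/pffun_onP => [<- | [sS nz]].
  rewrite (eq_subset (support_ffun_row x)); split=> // y /imageP[i].
  by rewrite inE => xi ->; rewrite !inE ffunE.
apply/setP => i; rewrite inE; apply/idP/idP => [xi | iS].
  by apply: (subsetP sS); rewrite inE ffunE.
by have := nz _ (image_f _ iS); rewrite !inE ffunE.
Qed.

Lemma card_supported_wt n (J : {set 'I_n}) (a : nat) :
  #|[set x in supported J | wt x == a]| = ('C(#|J|, a) * (q - 1) ^ a)%N.
Proof.
rewrite -cards_draws -sum1dep_card.
rewrite (partition_big (@supp n) (fun S => (S \subset J) && (#|S| == a))) /=;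
  last by move=> x; rewrite inE.
rewrite -sum_nat_cond_const; apply: eq_bigr => S /andP[sJ /eqP <-].
rewrite sum1dep_card -card_supp_eq; apply: eq_card => x; rewrite !inE.
have -> : wt x = #|supp x| by [].
by case: (eqVneq (supp x) S) => [-> | _]; rewrite ?sJ ?eqxx ?andbF.
Qed.

Lemma card_wt n (a : nat) :
  #|[set x : 'rV[F]_n | wt x == a]| = ('C(n, a) * (q - 1) ^ a)%N.
Proof.
rewrite -[n in 'C(n, _)]card_ord -cardsT -card_supported_wt.
by apply: eq_card => x; rewrite !inE subsetT.
Qed.

Lemma sum_wt n : (\sum_(x : 'rV[F]_n) wt x = n * (q - 1) * q ^ n.-1)%N.
Proof.
under eq_bigr do rewrite /wt -sum1dep_card.
rewrite (exchange_big_dep predT) //= -mulnA -[n in (n * _)%N]card_ord -sum_nat_const.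
apply: eq_bigr => i _; rewrite sum1dep_card.
have -> : [set x : 'rV[F]_n | x 0 i != 0] = ~: supported [set~ i].
  apply/setP => x; rewrite !inE; apply/idP/idP => [xi | ].
    by apply/negP => /subsetP/(_ i); rewrite !inE xi eqxx => /(_ isT).
  apply: contraR; rewrite negbK => xi; apply/subsetP => j; rewrite !inE.
  by apply: contraNneq => ->.
rewrite cardsCs setCK card_supported cardsC1 card_mx card_ord mul1n.
by case: n i => [[] // | n' _]; rewrite mulnBl mul1n -expnS.
Qed.

Lemma wt_le_dim n (x : 'rV[F]_n) : (wt x <= n)%N.
Proof. by rewrite -[n in (_ <= n)%N]card_ord max_card. Qed.

Lemma sum_partition_wt (V : nmodType) n b (A : {pred 'rV[F]_n}) (h : nat -> V) :
  (n <= b)%N ->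
  \sum_(x in A) h (wt x) = \sum_(a < b.+1) h a *+ #|[set x in A | wt x == a]|.
Proof.
move=> le_nb; rewrite (partition_big (fun x => inord (wt x) : 'I_b.+1) xpredT) //=.
apply: eq_bigr => a _; rewrite -sumr_const; apply: eq_big => [x | x].
  have lt_wt : (wt x < b.+1)%N by rewrite ltnS (leq_trans (wt_le_dim x)).
  by rewrite !inE -(inj_eq val_inj) /= inordK.
by case/andP=> _ /eqP <-; rewrite inordK // ltnS (leq_trans (wt_le_dim x)).
Qed.

Lemma sum_supported_wt (V : nmodType) n m (J : {set 'I_n}) (h : nat -> V) :
  #|J| = m -> (m <= n)%N ->
  \sum_(x in supported J) h (wt x) = \sum_(y : 'rV[F]_m) h (wt y).
Proof.
move=> <- le_mn; rewrite (sum_partition_wt _ _ (leqnn n)) (sum_partition_wt _ _ le_mn).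
apply: eq_bigr => a _; rewrite card_supported_wt -card_wt.
by congr (_ *+ #|_|); apply/setP => y; rewrite !inE.
Qed.

Lemma restr_mul_tr m n (H : 'M[F]_(m, n)) (J : {set 'I_n}) (u : 'rV[F]_n) :
  restr J u *m H^T = u *m (keep_cols H J)^T.
Proof.
apply/rowP => i; rewrite !mxE; apply: eq_bigr => j _; rewrite !mxE.
by case: ifP; rewrite ?mul0r ?mulr0.
Qed.

Lemma restr_supported n (J : {set 'I_n}) (u : 'rV[F]_n) : restr J u \in supported J.
Proof.
by rewrite inE; apply/subsetP => i; rewrite !inE mxE; case: ifP; rewrite ?eqxx.
Qed.

Lemma supported_eq0 n (J : {set 'I_n}) (x : 'rV[F]_n) i :
  x \in supported J -> i \notin J -> x 0 i = 0.
Proof. by rewrite inE => /subsetP sJ; apply: contraNeq => xi; apply: sJ; rewrite inE. Qed.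

Section Syndrome.
Variables (m n : nat) (H : 'M[F]_(m, n)) (I : {set 'I_n}).
Hypotheses (rank_compl : \rank (keep_cols H (~: I)) = #|~: I|) (card_compl : #|~: I| = m).

Let syndrome (x : 'rV[F]_n) := x *m H^T.

Lemma syndrome_onto : syndrome @: supported (~: I) = [set: 'rV[F]_m].
Proof.
apply/setP => s; rewrite inE.
have full : row_full (keep_cols H (~: I))^T by rewrite /row_full mxrank_tr rank_compl card_compl.
have /submxP[u ->] := submx_full s full.
by rewrite -restr_mul_tr; apply: imset_f; apply: restr_supported.
Qed.

Lemma syndrome_inj : {in supported (~: I) &, injective syndrome}.
Proof.
by apply/imset_injP; rewrite syndrome_onto cardsT card_mx mul1n card_supported card_compl.
Qed.

Lemma prange_out_syndrome x d : d \in supported (~: I) ->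
  prange_out H (syndrome (restr I x + d)) I x = restr I x + d.
Proof.
move=> sd; have restr_I i : i \in I -> (restr I x + d) 0 i = x 0 i.
  by move=> iI; rewrite !mxE iI (supported_eq0 sd) ?addr0 // inE iI.
rewrite /prange_out; case: pickP => [e /andP[/eqP es /forallP ex] | /(_ (restr I x + d))].
  have se : e - restr I x \in supported (~: I).
    rewrite inE; apply/subsetP => i; rewrite !inE !mxE; apply: contraNN => iI.
    by rewrite iI subr_eq0 (eqP (implyP (ex i) iI)).
  have : syndrome (e - restr I x) = syndrome d.
    by rewrite /syndrome mulmxBl es /syndrome mulmxDl addrC addKr.
  by move/(syndrome_inj se sd) <-; rewrite addrC subrK.
by rewrite eqxx /=; move/negP; case; apply/forallP => i; apply/implyP => /restr_I ->.
Qed.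

Lemma sum_prange_out (V : nmodType) (f : 'rV[F]_n -> V) x :
  \sum_(s : 'rV[F]_m) f (prange_out H s I x) = \sum_(d in supported (~: I)) f (restr I x + d).
Proof.
pose g s := f (prange_out H (syndrome (restr I x) + s) I x).
rewrite (reindex_inj (addrI (syndrome (restr I x)))) /= -/g.
transitivity (\sum_(s in syndrome @: supported (~: I)) g s).
  by rewrite syndrome_onto; apply: eq_bigl => s; rewrite inE.
rewrite big_imset /=; last exact: syndrome_inj.
by apply: eq_bigr => d sd; rewrite /g /syndrome -mulmxDl prange_out_syndrome.
Qed.

End Syndrome.

Lemma wt_restr_add n (I : {set 'I_n}) (x d : 'rV[F]_n) :
  d \in supported (~: I) -> wt (restr I x + d) = (wtI I x + wt d)%N.
Proof.
move=> sd; have d_I i : i \in I -> d 0 i = 0 by move=> iI; rewrite (supported_eq0 sd) // inE iI.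
rewrite /wt -(cardsID I); congr (_ + _)%N; apply: eq_card => i; rewrite !inE !mxE.
  by case: (boolP (i \in I)) => iI; rewrite ?andbF // d_I ?addr0 ?andbT.
by case: (boolP (i \in I)) => iI /=; rewrite ?add0r // d_I ?eqxx.
Qed.

Lemma sum_prange_out_wt (V : nmodType) k n (H : 'M[F]_(n - k, n)) I x (g : nat -> V) :
  is_info_set k H I ->
  \sum_(s : 'rV[F]_(n - k)) g (wt (prange_out H s I x))
    = \sum_(y : 'rV[F]_(n - k)) g (wtI I x + wt y)%N.
Proof.
move=> /andP[/eqP cardI /eqP rankI].
have card_compl : #|~: I| = (n - k)%N by rewrite cardsCs setCK card_ord cardI.
rewrite (sum_prange_out rankI card_compl (fun e => g (wt e))).
rewrite (eq_bigr (fun d => g (wtI I x + wt d)%N)) => [|d sd]; last by rewrite wt_restr_add.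
exact: (sum_supported_wt (fun a => g (wtI I x + a)%N) card_compl (leq_subr k n)).
Qed.

Lemma wtI_level_set_neq0 n (I : {set 'I_n}) t :
  (t <= #|I|)%N -> [set x : 'rV[F]_n | wtI I x == t] != set0.
Proof.
rewrite -bin_gt0 -cards_draws card_gt0 => /set0Pn[S]; rewrite inE => /andP[sSI /eqP <-].
apply/set0Pn; exists (\row_i (if i \in S then 1 else 0)); rewrite inE; apply/eqP/eq_card => i.
rewrite !inE mxE; case: (boolP (i \in S)) => iS; last by rewrite eqxx andbF.
by rewrite oner_eq0 andbT (subsetP sSI).
Qed.

Variable R : realFieldType.

Lemma sum_uniform_const (T : finType) (P : pred T) (c : R) :
  [set x | P x] != set0 -> \sum_(x | P x) (#|[set x | P x]|%:R^-1 * c) = c.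
Proof.
move=> nz; rewrite sumr_const; have -> : #|P| = #|[set x | P x]| by rewrite cardsE.
by rewrite -(mulr_natl (_ * c)) mulrA mulfV ?mul1r // pnatr_eq0 cards_eq0.
Qed.

Lemma prange_expect_wt n k (D : 'I_k.+1 -> R)
    (choose : 'M[F]_(n - k, n) -> {set 'I_n}) (g : nat -> R) :
  (forall H : 'M[F]_(n - k, n), \rank H = (n - k)%N -> is_info_set k H (choose H)) ->
  prange_expect D choose (fun e => g (wt e))
    = \sum_(t < k.+1)
        D t * ((q ^ (n - k))%:R^-1 * \sum_(y : 'rV[F]_(n - k)) g (t + wt y)%N).
Proof.
move=> info; rewrite /prange_expect.
set E := \sum_(t < k.+1) _.
rewrite -[RHS](@sum_uniform_const _ (fun H : 'M[F]_(n - k, n) => \rank H == (n - k)%N) E);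
  last first.
  by apply/set0Pn; exists (pid_mx (n - k)); rewrite inE rank_pid_mx ?leq_subr.
apply: eq_bigr => H /eqP /info infoH; have /andP[/eqP cardI _] := infoH.
rewrite exchange_big /= /E big_distrr /=; apply: eq_bigr => t _.
rewrite exchange_big /=.
set c := _ * (D t * _).
rewrite -[c](@sum_uniform_const _ (fun x : 'rV[F]_n => wtI (choose H) x == t)); last first.
  by apply: wtI_level_set_neq0; rewrite cardI -ltnS.
apply: eq_bigr => x /eqP wt_x.
by rewrite -big_distrr /= sum_prange_out_wt // wt_x /c; ring.
Qed.

Lemma sum_rV_wt_lawS m (h : nat -> R) :
  (q ^ m)%:R^-1 * \sum_(y : 'rV[F]_m) h (wt y) = \sum_(a < m.+1) lawS F R m a * h a.
Proof.
rewrite (sum_partition_wt predT h (leqnn m)) big_distrr /=; apply: eq_bigr => a _.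
by rewrite /lawS -(mulr_natl (h a)) mulrA (mulrC _^-1).
Qed.

Lemma sum_indicator (T : finType) (P : pred T) :
  \sum_(x : T) ((P x)%:R : R) = #|[set x | P x]|%:R.
Proof.
by rewrite -sum1dep_card natr_sum [RHS]big_mkcond; apply: eq_bigr => x _; case: (P x).
Qed.

Lemma card_wt_shift m t w :
  #|[set y : 'rV[F]_m | (t + wt y == w)%N]|
    = if (t <= w)%N then ('C(m, w - t) * (q - 1) ^ (w - t))%N else 0%N.
Proof.
case: leqP => [le_tw | lt_wt].
  by rewrite -card_wt; apply: eq_card => y; rewrite !inE -[wt y == _](eqn_add2l t) subnKC.
apply: eq_card0 => y; rewrite !inE; apply/negbTE; rewrite neq_ltn.
by rewrite (leq_trans lt_wt) ?orbT ?leq_addr.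
Qed.

Section PrangeLaw.
Variables (n k : nat) (D : 'I_k.+1 -> R) (choose : 'M[F]_(n - k, n) -> {set 'I_n}).
Hypothesis info : forall H : 'M[F]_(n - k, n), \rank H = (n - k)%N -> is_info_set k H (choose H).

Lemma prange_wt_law_conv w :
  prange_expect D choose (fun e => (wt e == w)%:R)
    = \sum_(a < (n - k).+1) \sum_(t < k.+1 | (a + t == w)%N) lawS F R (n - k) a * D t.
Proof.
rewrite (@prange_expect_wt n k D choose (fun a : nat => (a == w)%:R)) //.
under [RHS]eq_bigr do rewrite big_mkcond /=.
rewrite [RHS]exchange_big /=; apply: eq_bigr => t _.
rewrite (sum_rV_wt_lawS _ (fun a => (t + a == w)%N%:R)) big_distrr /=; apply: eq_bigr => a _.
by rewrite addnC; case: (a + t == w)%N; rewrite ?mulr0 ?mulr1 // mulrC.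
Qed.

Lemma prange_wt_law_binomial w :
  prange_expect D choose (fun e => (wt e == w)%:R)
    = \sum_(t < k.+1 | (t <= w)%N)
        ('C(n - k, w - t) * (q - 1) ^ (w - t))%:R / (q ^ (n - k))%:R * D t.
Proof.
rewrite (@prange_expect_wt n k D choose (fun a : nat => (a == w)%:R)) // [RHS]big_mkcond /=.
apply: eq_bigr => t _; rewrite (sum_indicator (fun y : 'rV[F]_(n - k) => t + wt y == w)%N).
by rewrite card_wt_shift; case: leqP => _; rewrite ?mulr0 // mulrC (mulrC _^-1).
Qed.

Hypothesis lt_kn : (k < n)%N.
Hypothesis D_sum1 : \sum_(t < k.+1) D t = 1.

Lemma prange_mean_wt :
  prange_expect D choose (fun e => (wt e)%:R)
    = \sum_(t < k.+1) (t%:R * D t) + (q - 1)%:R / q%:R * (n - k)%:R.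
Proof.
rewrite (@prange_expect_wt n k D choose (fun a : nat => a%:R)) //.
have q_gt0 : (0 < q)%N by apply/card_gt0P; exists 0.
have q_pow : (q ^ (n - k) = q * q ^ (n - k).-1)%N by rewrite -expnS prednK // subn_gt0.
have sum_t_wt t : \sum_(y : 'rV[F]_(n - k)) ((t + wt y)%N%:R : R)
    = (t * q ^ (n - k) + (n - k) * (q - 1) * q ^ (n - k).-1)%N%:R.
  by rewrite -natr_sum big_split /= sum_wt sum_nat_const card_mx mul1n mulnC.
under eq_bigr do rewrite sum_t_wt.
set mean := _ / _ * _; have -> : mean = \sum_(t < k.+1) D t * mean.
  by rewrite -mulr_suml D_sum1 mul1r.
rewrite -big_split /=; apply: eq_bigr => t _.
rewrite /mean q_pow !natrM !natrD !natrM; field.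
by rewrite !pnatr_eq0 -!lt0n q_gt0 expn_gt0 q_gt0.
Qed.

End PrangeLaw.

End Prange.

Unset Implicit Arguments.

Theorem proposition2 (F : finFieldType) (R : realFieldType) (n k : nat)
    (D : 'I_k.+1 -> R) (choose : 'M[F]_(n - k, n) -> {set 'I_n}) :
  (k < n)%N ->
  (forall t, 0 <= D t) -> \sum_(t < k.+1) D t = 1 ->
  (forall H : 'M[F]_(n - k, n), \rank H = (n - k)%N ->
      is_info_set k H (choose H)) ->
  let q := #|F| in
  let P (w : nat) := prange_expect D choose (fun e => (wt e == w)%:R) in
  [/\ (* |e| = S + T in law, S ~ weight of uniform vector of F^(n-k), T ~ D,
         S and T independent *)
      forall w : nat,
        P w = \sum_(a < (n - k).+1) \sum_(t < k.+1 | (a + t == w)%N)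
                lawS F R (n - k) a * D t,
      forall w : nat,
        P w = \sum_(t < k.+1 | (t <= w)%N)
                ('C(n - k, w - t) * (q - 1) ^ (w - t))%:R / (q ^ (n - k))%:R * D t
    & prange_expect D choose (fun e => (wt e)%:R)
        = \sum_(t < k.+1) (t%:R * D t) + (q - 1)%:R / q%:R * (n - k)%:R].
Proof.
move=> lt_kn _ D_sum1 info q P; split=> [w | w |].
- exact: prange_wt_law_conv.
- exact: prange_wt_law_binomial.
- exact: prange_mean_wt.
Qed.
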